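(* Every inductive poset is divisional.
   Context: All posets are finite, have a unique minimal element $\hat0$ and are ranked; $\chi_{\mathcal{P}}(t)=\sum_x\mu(\hat0,x)t^{\operatorname{rk}(\mathcal{P})-\operatorname{rk}(x)}$ with $\operatorname{rk}(\mathcal{P})=\max\operatorname{rk}$. Atoms are rank-1 elements, $A(\mathcal{P})$ their set; $\bigvee T$ is the set of minimal upper bounds of $T$. A lattice is geometric if $y$ covers $x$ iff there is an atom $a\not\le x$ with $y=x\vee a$; $\mathcal{P}$ is locally geometric if each $\mathcal{P}_{\le x}$ is a geometric lattice. For an atom $a$: $\mathcal{P}'$ is the subposet consisting of $\hat0$ and all elements of $\bigvee T$ for nonempty $T\subseteq A(\mathcal{P})\setminus\{a\}$; $\mathcal{P}''=\mathcal{P}_{\ge a}$ (minimal element $a$, rank $\operatorname{rk}-1$). Inductive posets: smallest class of locally geometric posets containing $\{\hat0\}$ and containing $\mathcal{P}$ whenever some atom $a$ has $\mathcal{P}',\mathcal{P}''$ inductive and $\chi_{\mathcal{P}''}\mid\chi_{\mathcal{P}'}$. Divisional posets: smallest class of locally geometric posets containing $\{\hat0\}$ and containing $\mathcal{P}$ whenever some atom $a$ has $\mathcal{P}''$ divisional and $\chi_{\mathcal{P}''}\mid\chi_{\mathcal{P}}$. *)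

(* Posets are finite subsets S of an ambient finite partial
   order T, carrying the induced order.  All constructions (P_{<=x}, P', P'')
   are again subsets of T. *)
From HB Require Import structures.
From mathcomp Require Import all_boot all_order all_algebra.
Set Implicit Arguments. Unset Strict Implicit. Unset Printing Implicit Defensive.
Import Order.Theory GRing.Theory Num.Theory.

Section PosetDefs.
Context {disp : Order.disp_t} {T : finPOrderType disp}.
Implicit Types (S L C X : {set T}) (x y z a : T).

Local Open Scope order_scope.

Definition minimals S : {set T} :=
  [set x in S | [forall y in S, (y <= x) ==> (y == x)]].

Definition has_unique_min S : Prop := #|minimals S| = 1%N.

(* the minimal element (meaningful when it is unique) *)
Definition bottom_of S : option T := [pick x in minimals S].

Definition chain C : bool := [forall x in C, forall y in C, x >=< y].

(* height of x in S: length of the longest chain of S with top element x;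
   in a ranked poset with \hat0 this is rk(x) *)
Definition height S x : nat :=
  \max_(C : {set T} | [&& C \subset S, x \in C, chain C &
                          [forall y in C, y <= x]]) #|C|.-1.

Definition covers S x y : bool :=
  [&& x \in S, y \in S, x < y & [forall z in S, ~~ ((x < z) && (z < y))]].

(* S is ranked: every maximal chain of [\hat0, x] has the same length,
   i.e. covering steps increase the rank (= height) by exactly one *)
Definition ranked S : Prop :=
  forall x y, covers S x y -> height S y = (height S x).+1.

Definition std_poset S : Prop := has_unique_min S /\ ranked S.

Definition poset_rank S : nat := \max_(x in S) height S x.

Definition atoms S : {set T} := [set x in S | height S x == 1%N].

Definition downset S x : {set T} := [set y in S | y <= x].
Definition upset S x : {set T} := [set y in S | x <= y].

Definition upper_bound S X z : bool := (z \in S) && [forall t in X, t <= z].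
Definition min_upper_bounds S X : {set T} :=
  [set z | upper_bound S X z &&
           [forall w, upper_bound S X w ==> (w <= z) ==> (w == z)]].

Definition is_join L x y z : bool :=
  [&& z \in L, x <= z, y <= z & [forall w in L, (x <= w) ==> (y <= w) ==> (z <= w)]].

Definition is_lattice L : Prop :=
  (forall x y, x \in L -> y \in L -> exists z, is_join L x y z) /\
  (forall x y, x \in L -> y \in L -> exists z,
     [&& z \in L, z <= x, z <= y & [forall w in L, (w <= x) ==> (w <= y) ==> (w <= z)]]).

Definition geometric_lattice L : Prop :=
  is_lattice L /\
  forall x y, x \in L -> y \in L ->
    (covers L x y <-> exists2 a, a \in atoms L & ~~ (a <= x) /\ is_join L x a y).

Definition locally_geometric S : Prop :=
  forall x, x \in S -> geometric_lattice (downset S x).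

(* Moebius function mu_S(a, y), defined by the usual recursion
   mu(a,a) = 1, mu(a,y) = - sum_{a <= z < y} mu(a,z); the recursion depth is
   bounded by the length of chains, so #|T|.+1 steps of fuel suffice. *)
Fixpoint mobius_rec S a (n : nat) y : int :=
  match n with
  | 0 => 0%R
  | n'.+1 => if y == a then 1%R
             else (- \sum_(z in S | ((a <= z) && (z < y))%O) mobius_rec S a n' z)%R
  end.
Definition mobius S a y : int := mobius_rec S a #|T|.+1 y.

Definition char_poly S : {poly int} :=
  match bottom_of S with
  | Some z => (\sum_(x in S) (mobius S z x)%:P * 'X^(poset_rank S - height S x))%R
  | None => 0%R
  end.

Definition poly_dvd (p q : {poly int}) : Prop := exists r : {poly int}, q = (r * p)%R.

Definition deletion S a : {set T} :=
  minimals S :|: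
  [set z | [exists X : {set T}, [&& X != set0, X \subset atoms S :\ a &
                                     z \in min_upper_bounds S X]]].

Definition restriction S a : {set T} := upset S a.

Inductive inductive_poset : {set T} -> Prop :=
| inductive_base S : #|S| = 1%N -> inductive_poset S
| inductive_step S a :
    std_poset S -> locally_geometric S -> a \in atoms S ->
    inductive_poset (deletion S a) -> inductive_poset (restriction S a) ->
    poly_dvd (char_poly (restriction S a)) (char_poly (deletion S a)) ->
    inductive_poset S.

Inductive divisional_poset : {set T} -> Prop :=
| divisional_base S : #|S| = 1%N -> divisional_poset S
| divisional_step S a :
    std_poset S -> locally_geometric S -> a \in atoms S ->
    divisional_poset (restriction S a) ->
    poly_dvd (char_poly (restriction S a)) (char_poly S) ->
    divisional_poset S.

End PosetDefs.

(* In a locally geometric poset with bottom [z0], the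
   meets in the lattice below [x] show that a set of atoms has at most one
   minimal upper bound below [x]; hence the cross-cut theorem gives
     mu(z0, x) = sum of (-1)^|B| over the sets B of atoms having x as a minimal
                 upper bound.
   Splitting according to whether the atom [a] lies in [B] yields
   mu_P(z0, x) = mu_P'(z0, x) - mu_P''(a, x), the terms vanishing outside P'
   and P'' respectively.  Ranks in P' agree with those of P (joins of atoms are
   reached through covers) and ranks in P'' drop by one, so
     chi_P = t^(rk P - rk P') chi_P' - t^(rk P - 1 - rk P'') chi_P''.
   Thus chi_P'' | chi_P' forces chi_P'' | chi_P, and induction on the
   derivation of an inductive poset shows that it is divisional. *)

From mathcomp Require Import all_boot all_order all_algebra.
From mathcomp Require Import zify.
(* Imported last so that [char_poly] is the poset one, not the matrix one. *)
Set Implicit Arguments. Unset Strict Implicit. Unset Printing Implicit Defensive.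
Import Order.Theory GRing.Theory.

Local Open Scope order_scope.

Lemma ex_minimal (disp : Order.disp_t) (T : finPOrderType disp) (X : {set T}) x :
  x \in X -> exists m, [/\ m \in X, m <= x & forall y, y \in X -> y <= m -> y = m].
Proof.
move=> xX; have [n] := ubnP #|[set y in X | y < x]|.
elim: n x xX => // n IH x xX; rewrite ltnS => le_n.
have [/exists_inP[y yX ltyx]|/exists_inPn minx] := boolP [exists y in X, y < x].
  have [|m [mX mley H]] := IH y yX.
    apply: leq_trans le_n; apply: proper_card; apply/properP; split.
      by apply/subsetP => z; rewrite !inE => /andP[-> /lt_trans->].
    by exists y; rewrite !inE ?yX ?ltyx ?ltxx.
  by exists m; split=> //; apply: le_trans mley (ltW ltyx).
exists x; split=> // y yX; rewrite le_eqVlt => /predU1P[//|ltyx].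
by have := minx y yX; rewrite ltyx.
Qed.

Lemma ex_maximal (disp : Order.disp_t) (T : finPOrderType disp) (X : {set T}) x :
  x \in X -> exists m, [/\ m \in X, x <= m & forall y, y \in X -> m <= y -> y = m].
Proof. exact: (@ex_minimal _ T^d). Qed.

Section FinitePoset.
Context {disp : Order.disp_t} {T : finPOrderType disp}.
Implicit Types (S X B C : {set T}) (x y z a b : T).

Lemma chainU1 C y : chain C -> {in C, forall c, c >=< y} -> chain (y |: C).
Proof.
move=> /forall_inP chC cmp; apply/forall_inP => u /setU1P[->|uC];
  apply/forall_inP => v /setU1P[->|vC].
- exact: comparablexx.
- by rewrite comparable_sym cmp.
- by rewrite cmp.
- exact: (forall_inP (chC u uC)).
Qed.

Lemma height_ge S x C : C \subset S -> x \in C -> chain C ->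
  {in C, forall y, y <= x} -> (#|C|.-1 <= height S x)%N.
Proof.
move=> sCS xC chC leCx; apply: (leq_bigmax_cond C).
by rewrite sCS xC chC; apply/forall_inP.
Qed.

Lemma height_chain S x : x \in S -> exists C, [/\ C \subset S, x \in C, chain C,
  {in C, forall y, y <= x} & height S x = #|C|.-1].
Proof.
move=> xS.
pose P (C : {set T}) := [&& C \subset S, x \in C, chain C & [forall y in C, y <= x]].
have Px : P [set x].
  rewrite /P sub1set xS set11 /=; apply/andP; split.
    by apply/forall_inP => u /set1P ->; apply/forall_inP => v /set1P ->; rewrite comparablexx.
  by apply/forall_inP => y /set1P ->.
have P_gt0 : (0 < #|P|)%N by apply/card_gt0P; exists [set x].
have [C /and4P[sCS xC chC /forall_inP leCx] hC] :=
  @eq_bigmax_cond _ P (fun C => #|C|.-1) P_gt0.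
by exists C; split=> //; rewrite -hC.
Qed.

Lemma height_lt S x y : x \in S -> y \in S -> x < y -> (height S x < height S y)%N.
Proof.
move=> xS yS ltxy; have [C [sCS xC chC leCx ->]] := height_chain xS.
have leCy : {in C, forall c, c <= y} by move=> c /leCx /le_trans; apply; exact: ltW.
have yC : y \notin C by apply/negP => /leCx /(lt_le_trans ltxy); rewrite ltxx.
have C_gt0 : (0 < #|C|)%N by apply/card_gt0P; exists x.
have := @height_ge S y (y |: C); rewrite cardsU1 yC /= prednK //; apply.
- by rewrite subUset sub1set yS.
- exact: setU11.
- by apply: chainU1 => // c /leCy /le_comparable; rewrite comparable_sym.
- by move=> c /setU1P[->|/leCy].
Qed.

Lemma height_subset S S' x : S' \subset S -> (height S' x <= height S x)%N.
Proof.
move=> sS'S; apply/bigmax_leqP => C /and4P[sCS' xC chC /forall_inP leCx].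
exact: height_ge (subset_trans sCS' sS'S) xC chC leCx.
Qed.

Lemma height_downclosed S S' x : S' \subset S -> x \in S' ->
  {in S, forall y, y <= x -> y \in S'} -> height S' x = height S x.
Proof.
move=> sS'S xS' downS'; apply/eqP; rewrite eqn_leq height_subset //=.
have [C [sCS xC chC leCx ->]] := height_chain (subsetP sS'S x xS').
apply: height_ge => //; apply/subsetP => c cC.
exact: downS' (subsetP sCS c cC) (leCx c cC).
Qed.

Lemma height_le_rank S x : x \in S -> (height S x <= poset_rank S)%N.
Proof. exact: leq_bigmax_cond. Qed.

Lemma atom_le_eq S a b : a \in atoms S -> b \in atoms S -> b <= a -> b = a.
Proof.
rewrite !inE => /andP[aS /eqP ha] /andP[bS /eqP hb].
rewrite le_eqVlt => /predU1P[//|/(height_lt bS aS)].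
by rewrite ha hb.
Qed.

Lemma atoms_sub S : atoms S \subset S.
Proof. by apply/subsetP => t; rewrite inE => /andP[]. Qed.

Lemma minimals_bottom S m : m \in S -> {in S, forall x, m <= x} -> minimals S = [set m].
Proof.
move=> mS lem; apply/setP => z; rewrite !inE; apply/andP/eqP => [[zS minz]|->].
  by apply/eqP; rewrite eq_sym; move/forall_inP: minz => /(_ m mS); rewrite lem.
by split=> //; apply/forall_inP => w wS; apply/implyP => wm; apply/eqP/le_anti; rewrite wm lem.
Qed.

Lemma min_upper_boundsP S X z : reflect
  [/\ z \in S, {in X, forall t, t <= z} &
      forall w, w \in S -> {in X, forall t, t <= w} -> w <= z -> w = z]
  (z \in min_upper_bounds S X).
Proof.
rewrite inE /upper_bound; apply: (iffP idP).
  case/andP=> /andP[zS /forall_inP ubz] /forallP minz; split=> // w wS ubw wz.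
  by apply/eqP; move: (minz w); rewrite wS wz; case: forall_inP.
case=> zS ubz minz; rewrite zS; apply/andP; split; first exact/forall_inP.
apply/forallP => w; apply/implyP => /andP[wS /forall_inP ubw].
by apply/implyP => /(minz w wS ubw) ->.
Qed.

Lemma mub_exists S X x : x \in S -> {in X, forall t, t <= x} ->
  exists2 y, y \in min_upper_bounds S X & y <= x.
Proof.
move=> xS ubx.
have : x \in [set w in S | [forall t in X, t <= w] && (w <= x)].
  by rewrite inE xS lexx andbT; apply/forall_inP.
case/ex_minimal=> y []; rewrite inE => /and3P[yS /forall_inP uby yx] _ miny.
exists y => //; apply/min_upper_boundsP; split=> [//|//|w wS ubw wy].
by apply: (miny w _ wy); rewrite inE wS (le_trans wy yx) andbT; apply/forall_inP.
Qed.

Lemma mub_set0 S z : z \in min_upper_bounds S set0 -> z \in minimals S.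
Proof.
case/min_upper_boundsP=> zS _ minz; rewrite inE zS; apply/forall_inP => w wS.
by apply/implyP => /(minz w wS) -> //; move=> t; rewrite inE.
Qed.

Lemma exists_cover_below S a y : a \in S -> y \in S -> a < y ->
  exists2 z, a <= z & covers S z y.
Proof.
move=> aS yS ay; have : a \in [set w in S | (a <= w) && (w < y)] by rewrite inE aS lexx.
case/ex_maximal=> z []; rewrite inE => /and3P[zS az zy] _ maxz.
exists z => //; rewrite /covers zS yS zy; apply/forall_inP => w wS.
apply/negP => /andP[zw wy]; have := maxz w; rewrite inE wS wy (le_trans az (ltW zw)).
by move=> /(_ isT (ltW zw)) wz; move: zw; rewrite wz ltxx.
Qed.

Lemma exists_cover_above S a y : a \in S -> y \in S -> a < y ->
  exists2 m, covers S a m & m <= y.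
Proof.
move=> aS yS ay; have : y \in [set w in S | (a < w) && (w <= y)] by rewrite inE yS lexx ay.
case/ex_minimal=> m []; rewrite inE => /and3P[mS am my] _ minm.
exists m => //; rewrite /covers aS mS am; apply/forall_inP => w wS.
apply/negP => /andP[aw wm]; have := minm w; rewrite inE wS aw (le_trans (ltW wm) my).
by move=> /(_ isT (ltW wm)) wm'; move: wm; rewrite wm' ltxx.
Qed.

Lemma covers_downset S x u v : v <= x -> covers (downset S x) u v = covers S u v.
Proof.
move=> vx; rewrite /covers !inE vx andbT.
have [ltuv|] := boolP (u < v); last by rewrite !andbF.
rewrite (le_trans (ltW ltuv) vx) andbT; congr [&& _, _, _ & _].
apply: eq_forallb => z; rewrite inE.
have [zx|zx] := boolP (z <= x); first by rewrite andbT.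
rewrite andbF /=; apply/esym/implyP => _; apply: contra zx => /andP[_ /ltW zv].
exact: le_trans zv vx.
Qed.

Lemma atoms_downset S x b : b \in downset S x ->
  (b \in atoms (downset S x)) = (b \in atoms S).
Proof.
move=> bL; have := bL; rewrite inE => /andP[bS bx].
rewrite [b \in atoms _]inE [b \in atoms S]inE bL bS (@height_downclosed S) //.
  by apply/subsetP => w; rewrite inE => /andP[].
by move=> y yS yb; rewrite inE yS (le_trans yb bx).
Qed.

Section Bottom.
Variables (S : {set T}) (z0 : T).
Hypothesis minS : minimals S = [set z0].

Lemma bottom_in : z0 \in S.
Proof. by have := set11 z0; rewrite -minS inE => /andP[]. Qed.

Lemma bottom_le x : x \in S -> z0 <= x.
Proof.
case/ex_minimal=> m [mS mx minm]; suff : m \in minimals S by rewrite minS => /set1P <-.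
by rewrite inE mS; apply/forall_inP => y yS; apply/implyP => /(minm y yS) ->.
Qed.

Lemma bottom_ofE : bottom_of S = Some z0.
Proof.
rewrite /bottom_of minS; case: pickP => [w /set1P -> //|].
by move/(_ z0); rewrite set11.
Qed.

Lemma height_bottom : height S z0 = 0%N.
Proof.
have [C [sCS z0C chC leCz0 ->]] := height_chain bottom_in.
suff /subset_leq_card : C \subset [set z0] by rewrite cards1; case: #|C| => [|[]].
apply/subsetP => c cC; apply/set1P/le_anti.
by rewrite leCz0 // bottom_le // (subsetP sCS).
Qed.

Lemma atomP a : a \in atoms S -> [/\ a \in S, height S a = 1%N & z0 < a].
Proof.
rewrite inE => /andP[aS /eqP ha]; split=> //; rewrite lt_def bottom_le // andbT.
by apply: contra_eq_neq ha => ->; rewrite height_bottom.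
Qed.

Lemma exists_atom_le x : x \in S -> x != z0 -> exists2 b, b \in atoms S & b <= x.
Proof.
move=> xS xz0; have : x \in [set y in S | (y <= x) && (y != z0)] by rewrite inE xS lexx.
case/ex_minimal=> b []; rewrite inE => /and3P[bS bx bz0] _ minb.
exists b => //; rewrite inE bS /= eqn_leq; apply/andP; split.
  have [C [sCS bC chC leCb ->]] := height_chain bS.
  suff /subset_leq_card : C \subset [set z0; b].
    by rewrite cards2; case: (z0 != b) => /=; lia.
  apply/subsetP => c cC; rewrite !inE; have cS := subsetP sCS c cC.
  have [//|cz0 /=] := eqVneq c z0; apply/eqP/minb; last exact: leCb.
  by rewrite inE cS cz0 (le_trans (leCb c cC) bx).
rewrite -(height_bottom) height_lt // ?bottom_in //.
by rewrite lt_def bz0 bottom_le.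
Qed.

Lemma atoms_le_eq0 y : y \in S -> ([set t in atoms S | t <= y] == set0) = (y == z0).
Proof.
move=> yS; have [->|yz0] := eqVneq y z0.
  apply/eqP/setP => t; rewrite in_set0 in_set; apply/negbTE/andP => -[tA tz0].
  by have [_ _ /lt_le_trans/(_ tz0)] := atomP tA; rewrite ltxx.
apply/negbTE/set0Pn; have [b bA lby] := exists_atom_le yS yz0.
by exists b; rewrite in_set bA.
Qed.

End Bottom.

Section LocallyGeometric.
Variable S : {set T}.
Hypothesis geoS : locally_geometric S.

Lemma mub_unique X x y1 y2 : x \in S -> X \subset S ->
  y1 \in min_upper_bounds S X -> y2 \in min_upper_bounds S X ->
  y1 <= x -> y2 <= x -> y1 = y2.
Proof.
move=> xS sXS /min_upper_boundsP[y1S ub1 min1] /min_upper_boundsP[y2S ub2 min2] y1x y2x.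
have [[_ meet] _] := geoS xS.
have y1L : y1 \in downset S x by rewrite inE y1S.
have y2L : y2 \in downset S x by rewrite inE y2S.
have [m /and4P[mL my1 my2 /forall_inP maxm]] := meet y1 y2 y1L y2L.
have mS : m \in S by move: mL; rewrite inE => /andP[].
have ubm : {in X, forall t, t <= m}.
  move=> t tX; have tL : t \in downset S x.
    by rewrite inE (subsetP sXS t tX) (le_trans (ub1 t tX) y1x).
  by move: (maxm t tL); rewrite ub1 // ub2.
by rewrite -(min1 m mS ubm my1) -(min2 m mS ubm my2).
Qed.

Lemma mub_setU1_join X x y b j : x \in S -> X \subset S ->
  y \in min_upper_bounds S X -> y <= x -> is_join (downset S x) y b j ->
  j \in min_upper_bounds S (b |: X).
Proof.
move=> xS sXS my yx /and4P[jL yj bj /forall_inP leastj].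
have := jL; rewrite inE => /andP[jS jx].
case/min_upper_boundsP: (my) => yS uby _.
apply/min_upper_boundsP; split=> [//| t /setU1P[-> //|/uby ty] | w wS ubw wj].
  exact: le_trans ty yj.
have wx := le_trans wj jx.
have [y' my' y'w] := mub_exists wS (fun t tX => ubw t (setU1r b tX)).
have y'y : y' = y := mub_unique xS sXS my' my (le_trans y'w wx) yx.
have wL : w \in downset S x by rewrite inE wS.
apply/le_anti; rewrite wj /=.
by have := leastj w wL; rewrite -y'y y'w ubw ?setU11.
Qed.

Lemma covers_join_atom x y b j : x \in S -> y \in S -> b \in atoms S ->
  ~~ (b <= y) -> is_join (downset S x) y b j -> covers S y j.
Proof.
move=> xS yS bA bNy joinj; have /and4P[jL yj bj _] := joinj.
have jx : j <= x by move: jL; rewrite inE => /andP[].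
have bS : b \in S by move: bA; rewrite inE => /andP[].
have yL : y \in downset S x by rewrite inE yS (le_trans yj jx).
have bL : b \in downset S x by rewrite inE bS (le_trans bj jx).
rewrite -(covers_downset _ _ jx); apply/(proj2 (geoS xS) y j yL jL).
by exists b; rewrite ?atoms_downset.
Qed.

End LocallyGeometric.

Lemma sum_setD_eq0 (V : nmodType) (U W : {set T}) (F : T -> V) : U \subset W ->
  {in W :\: U, forall x, F x = 0%R} -> (\sum_(x in W) F x = \sum_(x in U) F x)%R.
Proof.
by move=> sUW F0; rewrite (big_setID U) /= (setIidPr sUW) [X in (_ + X)%R]big1 ?addr0.
Qed.

Section CrossCut.
Local Open Scope ring_scope.

Lemma sum_subsets_split (R : nmodType) (A : {set T}) a (F : {set T} -> R) : a \in A ->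
  \sum_(B : {set T} | B \subset A) F B =
  \sum_(C : {set T} | C \subset A :\ a) F C + \sum_(C : {set T} | C \subset A :\ a) F (a |: C).
Proof.
move=> aA; rewrite (bigID (fun B : {set T} => a \in B)) /= addrC; congr (_ + _).
  by apply: eq_bigl => B; rewrite subsetD1.
rewrite (reindex_onto (fun C => a |: C) (fun B : {set T} => B :\ a)) /=; last first.
  by move=> B /andP[_ aB]; exact: setD1K.
apply: eq_bigl => C; rewrite subsetD1 setU11 andbT.
have [aC|aC] := boolP (a \in C); last first.
  by rewrite (setU1K aC) eqxx subUset sub1set aA.
rewrite andbF; apply/negbTE/andP => -[_ /eqP eqC].
by move: (setD11 a (a |: C)); rewrite eqC aC.
Qed.

Lemma sum_subsets_sign (A : {set T}) :
  \sum_(B : {set T} | B \subset A) (-1) ^+ #|B| = (A == set0)%:R :> int.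
Proof.
have [->|[a aA]] := set_0Vmem A.
  rewrite (eq_bigl (pred1 set0)); last by move=> B; rewrite subset0.
  by rewrite big_pred1_eq cards0 eqxx.
have /negPf-> : A != set0 by apply/set0Pn; exists a.
rewrite (sum_subsets_split _ aA) -big_split /=; apply: big1 => C sCA.
have aC : a \notin C by move: sCA; rewrite subsetD1 => /andP[].
by rewrite cardsU1 aC add1n exprS mulN1r addrN.
Qed.

Lemma sum_subsets_sign_all (A : {set T}) (P : pred T) :
  \sum_(B : {set T} | B \subset A) (if [forall t in B, P t] then (-1) ^+ #|B| else 0)
  = ([set t in A | P t] == set0)%:R :> int.
Proof.
rewrite -big_mkcondr -sum_subsets_sign; apply: eq_bigl => B.
apply/andP/subsetP => [[/subsetP sBA /forall_inP PB] t tB | sBAP].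
  by rewrite inE sBA ?PB.
split; first by apply/subsetP => t /sBAP; rewrite inE => /andP[].
by apply/forall_inP => t /sBAP; rewrite inE => /andP[].
Qed.

Lemma mobius_unique S a (g : T -> int) : a \in S ->
  (forall y, y \in S -> (a <= y)%O ->
     \sum_(z in S | (a <= z <= y)%O) g z = (y == a)%:R) ->
  forall y, y \in S -> (a <= y)%O -> mobius S a y = g y.
Proof.
move=> aS sum_g.
have ga : g a = 1.
  have := sum_g a aS (lexx a); rewrite eqxx (bigD1 a) /=; last by rewrite aS lexx.
  rewrite big1 ?addr0 // => z /andP[/andP[zS /andP[az za]] /eqP[]].
  exact/le_anti/andP.
have g_rec y : y \in S -> (a <= y)%O -> y != a ->
    g y = - \sum_(z in S | (a <= z < y)%O) g z.
  move=> yS ay /negPf ya; have := sum_g y yS ay.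
  rewrite ya (bigD1 y) /=; last by rewrite yS ay lexx.
  move/eqP; rewrite addr_eq0 => /eqP ->; congr (- _); apply: eq_bigl => z.
  by rewrite lt_def [y == z]eq_sym -!andbA [(z <= y)%O && _]andbC.
suff fuel n y : y \in S -> (a <= y)%O ->
    (#|[set z in S | (a <= z < y)%O]| < n)%N -> mobius_rec S a n y = g y.
  by move=> y yS ay; apply: fuel => //; rewrite ltnS max_card.
elim: n y => // n IH y yS ay; rewrite ltnS => size_n /=.
have [->//|ya] := eqVneq y a; rewrite g_rec //; congr (- _).
apply: eq_bigr => z /andP[zS /andP[az zy]]; apply: IH => //.
apply: leq_trans size_n; apply: proper_card; apply/properP; split.
  apply/subsetP => w; rewrite !inE => /andP[-> /andP[-> wz]].
  exact: lt_trans wz zy.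
by exists z; rewrite !inE ?zS ?az ?zy ?ltxx ?andbF.
Qed.

(* [crosscut_sum Y id S z] is the cross-cut sum over the subsets of [Y] having
   [z] as a minimal upper bound; [M := setU [set a]] counts instead the subsets
   [B] of [Y] with [z] a minimal upper bound of [a |: B]. *)
Definition crosscut_sum (Y : {set T}) (M : {set T} -> {set T}) S z : int :=
  \sum_(B : {set T} | B \subset Y)
    (if z \in min_upper_bounds S (M B) then (-1) ^+ #|B| else 0).

Lemma sum_crosscut_sum S (U Y : {set T}) (M : {set T} -> {set T}) c y :
  locally_geometric S -> y \in S ->
  (forall B : {set T}, B \subset Y -> M B \subset S) ->
  (forall (B : {set T}) z, B \subset Y -> z \in min_upper_bounds S (M B) ->
     (z \in U) && (c <= z)%O) ->
  \sum_(z in U | (c <= z <= y)%O) crosscut_sum Y M S z =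
  \sum_(B : {set T} | B \subset Y)
    (if [forall t in M B, t <= y]%O then (-1) ^+ #|B| else 0).
Proof.
move=> geoS yS sMS mubU; rewrite /crosscut_sum exchange_big /=.
apply: eq_bigr => B sBY; case: ifP => [/forall_inP leMy | /negbT/forall_inPn[t tM tNy]].
  have [z0 mz0 z0y] := mub_exists yS leMy; have /andP[z0U cz0] := mubU B z0 sBY mz0.
  rewrite (bigD1 z0) /=; last by rewrite z0U cz0 z0y.
  rewrite mz0 big1 ?addr0 // => z /andP[/andP[zU /andP[cz zy]] zz0].
  case: ifP => // mz; case/eqP: zz0.
  exact: (mub_unique geoS yS (sMS B sBY) mz mz0 zy z0y).
apply: big1 => z /andP[zU /andP[cz zy]]; case: ifP => // /min_upper_boundsP[_ ubz _].
by case/negP: tNy; exact: le_trans (ubz t tM) zy.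
Qed.

Lemma mobius_crosscut S z0 x : minimals S = [set z0] -> locally_geometric S ->
  x \in S -> mobius S z0 x = crosscut_sum (atoms S) id S x.
Proof.
move=> minS geoS xS; apply: (mobius_unique (bottom_in minS)) => //; last first.
  exact (bottom_le minS xS).
move=> y yS _; rewrite (@sum_crosscut_sum S S _ _ z0 y geoS yS).
- by rewrite sum_subsets_sign_all (atoms_le_eq0 minS yS).
- by move=> B /subset_trans; apply; exact: atoms_sub.
- by move=> B z _ /min_upper_boundsP[zS _ _]; rewrite zS (bottom_le minS).
Qed.

End CrossCut.

Section DeletionRestriction.
Variables (S : {set T}) (a z0 : T).
Hypotheses (minS : minimals S = [set z0]) (rankedS : ranked S).
Hypotheses (geoS : locally_geometric S) (aA : a \in atoms S).

Local Notation A := (atoms S).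
Local Notation D := (deletion S a).
Local Notation R := (restriction S a).

Let aS : a \in S. Proof. exact: subsetP (atoms_sub S) a aA. Qed.
Let z0S : z0 \in S. Proof. exact: bottom_in minS. Qed.
Let z0_lt_a : z0 < a. Proof. by case: (atomP minS aA). Qed.

Lemma atoms_setD1_sub : A :\ a \subset S.
Proof. exact: subset_trans (subsetDl _ _) (atoms_sub S). Qed.

Lemma mub_deletion B z : B \subset A :\ a -> z \in min_upper_bounds S B -> z \in D.
Proof.
move=> sBA mz; rewrite inE; have [B0|BN0] := eqVneq B set0.
  by rewrite mub_set0 // -B0.
by apply/orP; right; rewrite inE; apply/existsP; exists B; rewrite BN0 sBA.
Qed.

Lemma deletionP z : z \in D -> z = z0 \/
  exists B, [/\ B != set0, B \subset A :\ a & z \in min_upper_bounds S B].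
Proof.
rewrite inE => /orP[|]; first by rewrite minS => /set1P; left.
by rewrite inE => /existsP[B /and3P[BN0 sBA mz]]; right; exists B.
Qed.

Lemma deletion_sub : D \subset S.
Proof.
apply/subsetP => z /deletionP[->//|[B [_ _ /min_upper_boundsP[]//]]].
Qed.

Lemma minimals_deletion : minimals D = [set z0].
Proof.
apply: minimals_bottom; first by rewrite inE minS set11.
by move=> x /(subsetP deletion_sub); exact: bottom_le.
Qed.

Lemma restriction_sub : R \subset S.
Proof. by apply/subsetP => y; rewrite inE => /andP[]. Qed.

Lemma minimals_restriction : minimals R = [set a].
Proof.
apply: minimals_bottom; first by rewrite inE aS lexx.
by move=> x; rewrite inE => /andP[].
Qed.

Lemma atoms_le_deletion_eq0 y : y \in D ->
  ([set t in A :\ a | t <= y] == set0) = (y == z0).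
Proof.
move=> yD; have [->|yz0] := eqVneq y z0.
  rewrite -subset0; apply/subsetP => t; rewrite inE => /andP[/setD1P[_ tA] tz0].
  by have [_ _ /lt_le_trans/(_ tz0)] := atomP minS tA; rewrite ltxx.
case: (deletionP yD) => [/eqP|[B [/set0Pn[t tB] sBA /min_upper_boundsP[_ uby _]]]].
  by rewrite (negPf yz0).
by apply/set0Pn; exists t; rewrite inE (subsetP sBA t tB) uby.
Qed.

Lemma exists_other_atom y : y \in S -> a < y -> exists2 b, b \in A :\ a & b <= y.
Proof.
move=> yS ay; have [m cov_am my] := exists_cover_above aS yS ay.
have mS : m \in S by case/and4P: cov_am.
have aL : a \in downset S m by rewrite inE aS; case/and4P: cov_am => _ _ /ltW.
have mL : m \in downset S m by rewrite inE mS lexx.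
have := cov_am; rewrite -(covers_downset _ _ (lexx m)).
case/(proj2 (geoS mS) a m aL mL) => b bA [bNa /and4P[_ _ bm _]].
have bL : b \in downset S m by move: bA; rewrite inE => /andP[].
exists b; last exact: le_trans bm my.
rewrite in_setD1 -(atoms_downset bL) bA andbT.
by apply: contraNneq bNa => ->.
Qed.

Lemma atoms_le_restriction_eq0 y : y \in R ->
  ([set t in A :\ a | t <= y] == set0) = (y == a).
Proof.
rewrite inE => /andP[yS ay]; have [->|ya] := eqVneq y a.
  rewrite -subset0; apply/subsetP => t; rewrite inE => /andP[/setD1P[ta tA] tle].
  by rewrite (atom_le_eq aA tA tle) eqxx in ta.
have [b bA lby] : exists2 b, b \in A :\ a & b <= y.
  by apply: exists_other_atom yS _; rewrite lt_def ya.
by apply/set0Pn; exists b; rewrite inE bA.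
Qed.

Lemma mobius_deletion x : x \in D -> mobius D z0 x = crosscut_sum (A :\ a) id S x.
Proof.
move=> xD; have sDS := subsetP deletion_sub.
have z0D : z0 \in D by rewrite inE minS set11.
apply: (mobius_unique z0D) => //; last first.
  exact (bottom_le minS (sDS x xD)).
move=> y yD _; rewrite (@sum_crosscut_sum S D _ _ z0 y geoS (sDS y yD)).
- by rewrite sum_subsets_sign_all atoms_le_deletion_eq0.
- by move=> B /subset_trans; apply; exact: atoms_setD1_sub.
- move=> B z sBA mz; rewrite (mub_deletion sBA mz) /=.
  by case/min_upper_boundsP: mz => zS _ _; exact (bottom_le minS zS).
Qed.

Lemma mobius_restriction x : x \in R ->
  mobius R a x = crosscut_sum (A :\ a) (setU [set a]) S x.
Proof.
have aR : a \in R by rewrite inE aS lexx.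
move=> xR; apply: (mobius_unique aR) => //; last first.
  by move: xR; rewrite inE => /andP[].
move=> y yR _; have := yR; rewrite inE => /andP[yS ay].
rewrite (@sum_crosscut_sum S R _ _ a y geoS yS).
- rewrite -(atoms_le_restriction_eq0 yR) -sum_subsets_sign_all.
  apply: eq_bigr => C _; congr (if _ then _ else _).
  apply/forall_inP/forall_inP => leCy t; first by move=> tC; apply: leCy; rewrite setU1r.
  by case/setU1P=> [->|]; [exact: ay | exact: leCy].
- move=> C sCA; rewrite subUset sub1set aS.
  exact: subset_trans sCA atoms_setD1_sub.
- move=> C z _ /min_upper_boundsP[zS ubz _].
  by rewrite inE zS ubz ?setU11.
Qed.

Lemma crosscut_sum_split x : crosscut_sum A id S x =
  (crosscut_sum (A :\ a) id S x - crosscut_sum (A :\ a) (setU [set a]) S x)%R.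
Proof.
rewrite /crosscut_sum (sum_subsets_split _ aA) -sumrN; congr (_ + _)%R.
apply: eq_bigr => C sCA; have aC : a \notin C by move: sCA; rewrite subsetD1 => /andP[].
by rewrite cardsU1 aC add1n exprS mulN1r; case: ifP; rewrite ?oppr0.
Qed.

Lemma bottom_notin_restriction : z0 \notin R.
Proof. by rewrite inE; apply/andP => -[_ /(lt_le_trans z0_lt_a)]; rewrite ltxx. Qed.

Lemma height_restriction_le y : y \in R -> (height R y <= (height S y).-1)%N.
Proof.
move=> yR; have [C [sCR yC chC leCy ->]] := height_chain yR.
have sCS := subset_trans sCR restriction_sub.
have yS := subsetP sCS y yC.
have z0C : z0 \notin C by apply: contra bottom_notin_restriction; exact: (subsetP sCR).
suff : (#|C| <= height S y)%N by move=> /(leq_sub2r 1); rewrite !subn1.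
have := @height_ge S y (z0 |: C); rewrite cardsU1 z0C; apply.
- by rewrite subUset sub1set z0S.
- exact: setU1r.
- apply: chainU1 => // c /(subsetP sCS) /(bottom_le minS) /le_comparable.
  by rewrite comparable_sym.
- by move=> c /setU1P[->|/leCy //]; exact: (bottom_le minS yS).
Qed.

Lemma height_restriction_ge y : y \in R -> ((height S y).-1 <= height R y)%N.
Proof.
move=> yR; have [n] := ubnP (height S y).
elim: n y yR => // n IH y yR; rewrite ltnS => hyn.
have := yR; rewrite inE => /andP[yS ay].
have [->|ya] := eqVneq y a; first by have [_ -> _] := atomP minS aA.
have ltay : a < y by rewrite lt_def ya.
have [z az cov_zy] := exists_cover_below aS yS ltay.
have /and4P[zS _ ltzy _] := cov_zy.
have zR : z \in R by rewrite inE zS az.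
have hSy := rankedS cov_zy; rewrite hSy in hyn *.
apply: leq_trans (leqSpred _) _.
exact: leq_ltn_trans (IH z zR hyn) (height_lt zR yR ltzy).
Qed.

Lemma height_restriction y : y \in R -> height R y = (height S y).-1.
Proof.
by move=> yR; apply/eqP; rewrite eqn_leq height_restriction_le ?height_restriction_ge.
Qed.

Lemma height_mub_deletion B y : B \subset A :\ a -> y \in min_upper_bounds S B ->
  (height S y <= height D y)%N.
Proof.
have [n] := ubnP #|B|; elim: n B y => // n IH B y; rewrite ltnS => cardB sBA my.
have [B0|[b bB]] := set_0Vmem B.
  by move: my; rewrite B0 => /mub_set0; rewrite minS => /set1P ->; rewrite height_bottom.
have sBS := subset_trans sBA atoms_setD1_sub.
have [yS uby miny] := min_upper_boundsP _ _ _ my.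
have sB0B : B :\ b \subset B := subsetDl B [set b].
have sB0A := subset_trans sB0B sBA.
have [y0 my0 y0y] := mub_exists yS (fun t tB0 => uby t (subsetP sB0B t tB0)).
have [y0S uby0 _] := min_upper_boundsP _ _ _ my0.
have IH0 : (height S y0 <= height D y0)%N.
  by apply: IH sB0A my0; rewrite -ltnS (cardsD1 b B) bB in cardB.
have [by0|bNy0] := boolP (b <= y0).
  suff <- : y0 = y by [].
  apply: miny y0S _ y0y => t tB; have [->//|tb] := eqVneq t b.
  by apply: uby0; rewrite in_setD1 tb.
have [[joins _] _] := geoS yS.
have [j joinj] : exists j, is_join (downset S y) y0 b j.
  by apply: joins; rewrite inE ?y0S ?y0y ?(subsetP sBS b bB) ?uby.
have jy : j = y.
  have := mub_setU1_join geoS yS (subset_trans sB0A atoms_setD1_sub) my0 y0y joinj.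
  rewrite setD1K // => mj; have /and4P[+ _ _ _] := joinj; rewrite inE => /andP[_ jy].
  exact: (mub_unique geoS yS sBS mj my jy (lexx y)).
have bA : b \in A by move: (subsetP sBA b bB); rewrite in_setD1 => /andP[].
have cov : covers S y0 y by rewrite -jy; exact: (covers_join_atom geoS yS y0S bA bNy0 joinj).
have /and4P[_ _ lty0y _] := cov; rewrite (rankedS cov).
exact: leq_ltn_trans IH0 (height_lt (mub_deletion sB0A my0) (mub_deletion sBA my) lty0y).
Qed.

Lemma height_deletion x : x \in D -> height D x = height S x.
Proof.
move=> xD; apply/eqP; rewrite eqn_leq height_subset ?deletion_sub //=.
case: (deletionP xD) => [->|[B [_ sBA mx]]]; first by rewrite height_bottom.
exact: height_mub_deletion mx.
Qed.

Lemma rank_deletion_le : (poset_rank D <= poset_rank S)%N.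
Proof.
apply/bigmax_leqP => x xD; rewrite height_deletion //.
exact/height_le_rank/(subsetP deletion_sub).
Qed.

Lemma rank_restriction_le : (poset_rank R <= (poset_rank S).-1)%N.
Proof.
apply/bigmax_leqP => x xR; rewrite height_restriction // -!subn1 leq_sub2r //.
exact/height_le_rank/(subsetP restriction_sub).
Qed.

Section CharPoly.
Local Open Scope ring_scope.

Lemma char_poly_deletion : 'X^(poset_rank S - poset_rank D) * char_poly D =
  \sum_(x in S) (crosscut_sum (A :\ a) id S x)%:P * 'X^(poset_rank S - height S x).
Proof.
rewrite /char_poly (bottom_ofE minimals_deletion) mulr_sumr.
rewrite (sum_setD_eq0 deletion_sub); last first.
  move=> x /setDP[_ xND]; rewrite /crosscut_sum big1 ?mul0r // => B sBA.
  by case: ifP => // mx; case/negP: xND; exact: mub_deletion sBA mx.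
apply: eq_bigr => x xD; rewrite mobius_deletion // height_deletion // mulrCA -exprD.
have := height_le_rank xD; rewrite height_deletion // => hx.
by congr (_ * 'X^_); have := rank_deletion_le; lia.
Qed.

Lemma char_poly_restriction :
  'X^((poset_rank S).-1 - poset_rank R) * char_poly R =
  \sum_(x in S) (crosscut_sum (A :\ a) (setU [set a]) S x)%:P *
                'X^(poset_rank S - height S x).
Proof.
rewrite /char_poly (bottom_ofE minimals_restriction) mulr_sumr.
rewrite (sum_setD_eq0 restriction_sub); last first.
  move=> x /setDP[xS xNR]; rewrite /crosscut_sum big1 ?mul0r // => C _.
  case: ifP => // /min_upper_boundsP[_ ubx _]; case/negP: xNR.
  by rewrite inE xS ubx ?setU11.
apply: eq_bigr => x xR; rewrite mobius_restriction // height_restriction // mulrCA -exprD.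
have := height_le_rank xR; rewrite height_restriction // => hx.
have xS := subsetP restriction_sub x xR.
have hx_pos : (0 < height S x)%N.
  rewrite -(height_bottom minS) height_lt //; apply: lt_le_trans z0_lt_a _.
  by move: xR; rewrite inE => /andP[].
by congr (_ * 'X^_); have := rank_restriction_le; lia.
Qed.

Lemma char_poly_deletion_restriction : char_poly S =
  'X^(poset_rank S - poset_rank D) * char_poly D -
  'X^((poset_rank S).-1 - poset_rank R) * char_poly R.
Proof.
rewrite char_poly_deletion char_poly_restriction -sumrB /char_poly (bottom_ofE minS).
apply: eq_bigr => x xS.
by rewrite (mobius_crosscut minS geoS xS) crosscut_sum_split polyCB mulrBl.
Qed.

End CharPoly.

End DeletionRestriction.

Lemma char_poly_restriction_dvd S a : std_poset S -> locally_geometric S ->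
  a \in atoms S -> poly_dvd (char_poly (restriction S a)) (char_poly (deletion S a)) ->
  poly_dvd (char_poly (restriction S a)) (char_poly S).
Proof.
case=> /eqP/cards1P[z0 minS] rankedS geoS aA [q Dq].
exists ('X^(poset_rank S - poset_rank (deletion S a)) * q
        - 'X^((poset_rank S).-1 - poset_rank (restriction S a)))%R.
by rewrite (char_poly_deletion_restriction minS rankedS geoS aA) Dq mulrBl mulrA.
Qed.

End FinitePoset.

Theorem proposition3p8 (disp : Order.disp_t) (T : finPOrderType disp) (S : {set T}) :
  inductive_poset S -> divisional_poset S.
Proof.
elim=> [S1 cardS1 | S' a stdS geoS aA _ _ _ divR dvdRD]; first exact: divisional_base.
exact: divisional_step stdS geoS aA divR (char_poly_restriction_dvd stdS geoS aA dvdRD).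
Qed.
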